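(* For all $a,d,x\in\mathbb C$ and $n\in\mathbb C$ with $d-n\in\mathbb N$, $$f(a,d,n)_x=f(a-1,d,n)_x+f(a-1,d,n+1)_{x-1}$$ and $$f(a,d,n)_x=f(a-1,d,n)_{x+1}+f(a-1,d,n+1)_{x+1}.$$
   Context: For $z\in\mathbb C$ and $k\in\mathbb N$, $\binom{z}{k}=\frac{z(z-1)\cdots(z-k+1)}{k!}$. For $a,d,x,n\in\mathbb C$ with $d-n\in\mathbb N\cup\{-1\}$, $f(a,d,n)_x=\sum_{k=0}^{d-n}\binom{a+d+x-k}{k}\binom{d+k-x}{d-n-k}$, the empty sum (when $d-n=-1$) being $0$. *)

From HB Require Import structures.
From mathcomp Require Import all_boot all_order all_algebra.
From mathcomp Require Import boolp reals.
From mathcomp Require Import complex.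
Set Implicit Arguments. Unset Strict Implicit. Unset Printing Implicit Defensive.
Import Order.TTheory GRing.Theory Num.Theory.
Local Open Scope ring_scope.
Local Open Scope complex_scope.

Section Defs.
Variable R : realType.
Notation C := R[i].

Definition binom (z : C) (k : nat) : C :=
  (\prod_(i < k) (z - i%:R)) / (k`!)%:R.

(* flen d n = d - n + 1 when d - n \in N \cup {-1}, i.e. the number of
   summands of f(a,d,n); it is 0 (the value is irrelevant) otherwise. *)
Definition flen (d n : C) : nat :=
  match pselect (exists m : nat, d - n + 1 = m%:R) with
  | left P => projT1 (cid P)
  | right _ => 0%N
  end.

(* f(a,d,n)_x = sum_{k=0}^{d-n} binom(a+d+x-k, k) binom(d+k-x, d-n-k);
   for k < flen d n the nat (flen d n).-1 - k equals d-n-k. *)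
Definition f (a d n x : C) : C :=
  \sum_(k < flen d n)
     binom (a + d + x - k%:R) k * binom (d + k%:R - x) ((flen d n).-1 - k).
End Defs.

From HB Require Import structures.
From mathcomp Require Import all_boot all_order all_algebra.
From mathcomp Require Import boolp reals.
From mathcomp Require Import complex.
From mathcomp Require Import ring zify.
Import Order.TTheory GRing.Theory Num.Theory.
Local Open Scope ring_scope.
Local Open Scope complex_scope.

(* Both identities are Pascal's rule binom z (k+1) = binom (z-1) (k+1) + binom (z-1) k,
   applied termwise: to the first binomial factor of f(a,d,n)_x for the first
   identity (after splitting off the k = 0 term), and to the second factor for the
   second identity (after splitting off the k = d-n term). The pieces regroup into
   the sums defining f(a-1,d,n) and f(a-1,d,n+1), the latter having one term less. *)

Section FPascal.
Variable R : realType.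
Notation C := R[i].

Lemma binom0 (z : C) : binom z 0 = 1.
Proof. by rewrite /binom big_ord0 fact0 divr1. Qed.

Lemma binom_pascal (z : C) (k : nat) :
  binom z k.+1 = binom (z - 1) k.+1 + binom (z - 1) k.
Proof.
rewrite /binom big_ord_recl big_ord_recr /=.
have -> : \prod_(i < k) (z - (bump 0 i)%:R) = \prod_(i < k) (z - 1 - i%:R).
  by apply: eq_bigr => i _; rewrite /bump /= add1n -natr1; ring.
have kfact_neq0 : (k`!)%:R != 0 :> C by rewrite pnatr_eq0 -lt0n fact_gt0.
have kS_neq0 : (k%:R + 1) != 0 :> C by rewrite natr1 pnatr_eq0.
rewrite factS natrM -natr1.
by field; rewrite kfact_neq0 kS_neq0.
Qed.

Lemma flen_eq {d n : C} {m : nat} : d - n + 1 = m%:R -> flen d n = m.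
Proof.
move=> dn; rewrite /flen; case: pselect => [P|]; last by case; exists m.
by case: (cid P) => m' /= dn'; apply/eqP; rewrite -(eqr_nat C) -dn' dn.
Qed.

Lemma f_sum (a d n x : C) (m : nat) : d - n + 1 = m%:R ->
  f a d n x =
  \sum_(k < m) binom (a + d + x - k%:R) k * binom (d + k%:R - x) (m.-1 - k).
Proof. by move=> dn; rewrite /f (flen_eq dn). Qed.

Variables (a d n x : C) (m : nat).
Hypothesis dn : d - n = m%:R.

Let f_n (a' x' : C) : f a' d n x' =
  \sum_(k < m.+1) binom (a' + d + x' - k%:R) k * binom (d + k%:R - x') (m - k).
Proof. by apply: f_sum; rewrite dn natr1. Qed.

Let f_nS (a' x' : C) : f a' d (n + 1) x' =
  \sum_(k < m) binom (a' + d + x' - k%:R) k * binom (d + k%:R - x') (m.-1 - k).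
Proof. by apply: f_sum; rewrite opprD addrA subrK. Qed.

Lemma f_pascal_l : f a d n x = f (a - 1) d n x + f (a - 1) d (n + 1) (x - 1).
Proof.
rewrite !f_n f_nS big_ord_recl [in RHS]big_ord_recl /= !binom0 !mul1r.
rewrite -[RHS]addrA; congr (_ + _); rewrite -big_split; apply: eq_bigr => i _ /=.
rewrite /bump /= add1n binom_pascal mulrDl -natr1.
congr (binom _ _ * binom _ _ + binom _ _ * binom _ _); [ring|ring|ring|lia].
Qed.

Lemma f_pascal_r :
  f a d n x = f (a - 1) d n (x + 1) + f (a - 1) d (n + 1) (x + 1).
Proof.
rewrite !f_n f_nS big_ord_recr [in RHS]big_ord_recr /= subnn !binom0 !mulr1.
rewrite [RHS]addrAC; congr (_ + _); last by congr (binom _ _); ring.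
rewrite -big_split; apply: eq_bigr => -[i /= lt_im] _.
have -> : (m - i = (m.-1 - i).+1)%N by lia.
rewrite binom_pascal mulrDr.
by congr (binom _ _ * binom _ _ + binom _ _ * binom _ _); ring.
Qed.

End FPascal.

Theorem lemma4p3 (R : realType) (a d x n : R[i]) :
  (exists m : nat, d - n = m%:R) ->
  f a d n x = f (a - 1) d n x + f (a - 1) d (n + 1) (x - 1) /\
  f a d n x = f (a - 1) d n (x + 1) + f (a - 1) d (n + 1) (x + 1).
Proof. by case=> m dn; split; [exact: f_pascal_l dn | exact: f_pascal_r dn]. Qed.
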